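(* Let $n\ge2$ and let $R=\frac1n E_n$ be the $n\times n$ comonotone checkerboard copula ($E_n$ the identity matrix). For every $n\times n$ checkerboard copula $P\neq R$, the function $\alpha\mapsto\tau(\alpha R+(1-\alpha)P)$ is strictly increasing on $[0,1]$.
   Context: An $n\times n$ checkerboard copula is a real $n\times n$ matrix with nonnegative entries whose row and column sums all equal $\frac1n$. $\Xi=(\xi_{ij})$ with $\xi_{ij}=1$ if $i=j$, $2$ if $i>j$, $0$ if $i<j$. For an $n\times n$ matrix $M$, $\tau(M)=1-\mathrm{tr}(\Xi M\Xi M^\top)$ (Kendall's $\tau$ of a checkerboard copula). *)

From HB Require Import structures.
From mathcomp Require Import all_boot all_order all_algebra.
From mathcomp Require Import reals.
Set Implicit Arguments. Unset Strict Implicit. Unset Printing Implicit Defensive.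
Import Order.TTheory GRing.Theory Num.Theory.
Local Open Scope ring_scope.

Definition checkerboard {R : realType} (n : nat) (M : 'M[R]_n) : Prop :=
  (forall i j, 0 <= M i j) /\
  (forall i, \sum_(j < n) M i j = n%:R^-1) /\
  (forall j, \sum_(i < n) M i j = n%:R^-1).

Definition Xi {R : realType} (n : nat) : 'M[R]_n :=
  \matrix_(i < n, j < n)
    (if i == j then 1 else if (j < i)%N then 2 else 0).

Definition tau {R : realType} (n : nat) (M : 'M[R]_n) : R :=
  1 - \tr (Xi n *m M *m Xi n *m M^T).

Definition comonotone {R : realType} (n : nat) : 'M[R]_n := n%:R^-1 *: 1%:M.

(* Write Xi = 1 + S with S_ik the sign of i - k. For M with uniform margins the
   terms of tr(Xi M Xi M^T) that are linear in S vanish, so tau M = K(M, M) for the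
   symmetric bilinear concordance form
     K(X, Y) = sum_{ij,kl} X_ij Y_kl sign(i - k) sign(j - l).
   Along M_t = t R + (1 - t) P this makes tau(M_t) the quadratic Bezier curve with
   control values K(P,P), K(R,P), K(R,R), which is strictly increasing on [0, 1] as
   soon as K(P,P) <= K(R,P) < K(R,R).
   - K(P,P) <= K(R,P): for fixed (i, j), sign(i - k) sign(j - l) is bounded by some
     h(k) + h'(l) with equality on the diagonal k = l; averaging against the
     uniform margins of P, the P-average of the sign product is at most its
     R-average.
   - K(R,R) - K(R,P) = sum_ij P_ij (g_ii - g_ij), where g is the Gram matrix of the
     rows of S scaled by 1/n; g_ii - g_ij >= 0, strictly when i <> j, and P <> R
     puts positive mass off the diagonal. *)

From mathcomp Require Import all_boot all_order all_algebra.
From mathcomp Require Import reals.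
From mathcomp Require Import zify lra ring.
Set Implicit Arguments.
Unset Strict Implicit.
Unset Printing Implicit Defensive.

Import Order.TTheory GRing.Theory Num.Theory.
Local Open Scope ring_scope.

Lemma quadratic_bezier_lt (R : realFieldType) (c0 c1 c2 a b : R) :
  c0 <= c1 -> c1 < c2 -> 0 <= a -> a < b -> b <= 1 ->
  a ^+ 2 * c2 + 2 * a * (1 - a) * c1 + (1 - a) ^+ 2 * c0 <
  b ^+ 2 * c2 + 2 * b * (1 - b) * c1 + (1 - b) ^+ 2 * c0.
Proof.
move=> c01 c12 a0 ab b1; rewrite -subr_gt0.
have -> : b ^+ 2 * c2 + 2 * b * (1 - b) * c1 + (1 - b) ^+ 2 * c0 -
  (a ^+ 2 * c2 + 2 * a * (1 - a) * c1 + (1 - a) ^+ 2 * c0) =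
  (b - a) * ((a + b) * (c2 - c1) + (2 - a - b) * (c1 - c0)) by ring.
rewrite mulr_gt0 ?subr_gt0 // ltr_pwDl ?mulr_ge0 ?mulr_gt0 //; lra.
Qed.

Section Concordance.
Context {R : realFieldType} {n : nat}.
Implicit Types (X Y : 'M[R]_n) (i j k l : 'I_n).

(* [comonotone n], restated over an arbitrary real field. *)
Local Notation E := (n%:R^-1 *: 1%:M : 'M[R]_n).

Definition sign_cmp i k : R :=
  if (k < i)%N then 1 else if (i < k)%N then -1 else 0.

Lemma sign_cmp_antisym i k : sign_cmp k i = - sign_cmp i k.
Proof. by rewrite /sign_cmp; case: ltngtP; rewrite ?opprK ?oppr0. Qed.

Lemma sign_cmpxx i : sign_cmp i i = 0.
Proof. by rewrite /sign_cmp ltnn. Qed.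

Lemma sum_sign_cmp : \sum_i \sum_k sign_cmp i k = 0.
Proof.
set S := \sum_i _; suff : S = - S by lra.
rewrite {1}/S exchange_big -sumrN; apply: eq_bigr => k _.
by rewrite -sumrN; apply: eq_bigr => i _; rewrite sign_cmp_antisym.
Qed.

Definition uniform_margins X :=
  (forall i, \sum_j X i j = n%:R^-1) /\ (forall j, \sum_i X i j = n%:R^-1).

Lemma uniform_margins_comonotone : uniform_margins E.
Proof.
split=> i; rewrite (bigD1 i) //= big1 => [|j ji]; rewrite !mxE ?eqxx ?mulr1 ?addr0 //.
  by rewrite eq_sym (negbTE ji) mulr0.
by rewrite (negbTE ji) mulr0.
Qed.

Lemma uniform_margins_lincomb X Y a :
  uniform_margins X -> uniform_margins Y -> uniform_margins (a *: X + (1 - a) *: Y).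
Proof.
move=> [X1 X2] [Y1 Y2]; split=> i; under eq_bigr do rewrite !mxE;
  by rewrite big_split /= -!mulr_sumr ?X1 ?Y1 ?X2 ?Y2 -mulrDl addrC subrK mul1r.
Qed.

Section UniformMargins.
Variable X : 'M[R]_n.
Hypothesis hX : uniform_margins X.

Lemma sum_margins_fst (f : 'I_n -> R) :
  \sum_(p : 'I_n * 'I_n) X p.1 p.2 * f p.1 = n%:R^-1 * \sum_i f i.
Proof.
rewrite -(pair_bigA _ (fun i j => X i j * f i)) mulr_sumr.
by apply: eq_bigr => i _; rewrite -big_distrl hX.1.
Qed.

Lemma sum_margins_snd (f : 'I_n -> R) :
  \sum_(p : 'I_n * 'I_n) X p.1 p.2 * f p.2 = n%:R^-1 * \sum_i f i.
Proof.
rewrite -(pair_bigA _ (fun i j => X i j * f j)) exchange_big mulr_sumr.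
by apply: eq_bigr => j _; rewrite -big_distrl hX.2.
Qed.

End UniformMargins.

Definition concordance X Y : R :=
  \sum_(p : 'I_n * 'I_n) \sum_(q : 'I_n * 'I_n)
     X p.1 p.2 * Y q.1 q.2 * (sign_cmp p.1 q.1 * sign_cmp p.2 q.2).

Lemma concordanceC X Y : concordance X Y = concordance Y X.
Proof.
rewrite /concordance exchange_big; apply: eq_bigr => p _; apply: eq_bigr => q _.
by rewrite (sign_cmp_antisym p.1) (sign_cmp_antisym p.2); ring.
Qed.

Lemma concordance_lincomb X Y a b :
  concordance (a *: X + b *: Y) (a *: X + b *: Y) =
  a ^+ 2 * concordance X X + 2 * a * b * concordance X Y + b ^+ 2 * concordance Y Y.
Proof.
rewrite -[2]/(1 + 1) !mulrDl !mul1r {2}concordanceC /concordance !mulr_sumr -!big_split.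
apply: eq_bigr => p _.
rewrite !mulr_sumr -!big_split; apply: eq_bigr => q _.
by rewrite /= !mxE; ring.
Qed.

Lemma sum_margins_fst_sign X Y : uniform_margins X -> uniform_margins Y ->
  \sum_(p : 'I_n * 'I_n) \sum_(q : 'I_n * 'I_n)
    X p.1 p.2 * Y q.1 q.2 * sign_cmp p.1 q.1 = 0.
Proof.
move=> hX hY; under eq_bigr do under eq_bigr do rewrite -mulrA.
under eq_bigr do rewrite -mulr_sumr (sum_margins_fst hY (sign_cmp _)).
rewrite (sum_margins_fst hX (fun i => n%:R^-1 * \sum_k sign_cmp i k)).
by rewrite -mulr_sumr sum_sign_cmp !mulr0.
Qed.

Lemma sum_margins_snd_sign X Y : uniform_margins X -> uniform_margins Y ->
  \sum_(p : 'I_n * 'I_n) \sum_(q : 'I_n * 'I_n)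
    X p.1 p.2 * Y q.1 q.2 * sign_cmp p.2 q.2 = 0.
Proof.
move=> hX hY; under eq_bigr do under eq_bigr do rewrite -mulrA.
under eq_bigr do rewrite -mulr_sumr (sum_margins_snd hY (sign_cmp _)).
rewrite (sum_margins_snd hX (fun i => n%:R^-1 * \sum_k sign_cmp i k)).
by rewrite -mulr_sumr sum_sign_cmp !mulr0.
Qed.

Lemma sum_margins_mass X : (0 < n)%N -> uniform_margins X ->
  \sum_(p : 'I_n * 'I_n) X p.1 p.2 = 1.
Proof.
move=> n_gt0 hX; under eq_bigr do rewrite -[X _ _]mulr1.
rewrite (sum_margins_fst hX (fun=> 1)) sumr_const card_ord -mulr_natr mulVf //.
by rewrite mul1r pnatr_eq0 -lt0n.
Qed.

Lemma sum_margins_Xi_weights X Y :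
  (0 < n)%N -> uniform_margins X -> uniform_margins Y ->
  \sum_(p : 'I_n * 'I_n) \sum_(q : 'I_n * 'I_n)
    X p.1 p.2 * Y q.1 q.2 * ((1 + sign_cmp p.1 q.1) * (1 - sign_cmp p.2 q.2))
  = 1 - concordance X Y.
Proof.
move=> n_gt0 hX hY.
transitivity (\sum_(p : 'I_n * 'I_n) \sum_(q : 'I_n * 'I_n) X p.1 p.2 * Y q.1 q.2
  + \sum_(p : 'I_n * 'I_n) \sum_(q : 'I_n * 'I_n) X p.1 p.2 * Y q.1 q.2 * sign_cmp p.1 q.1
  - \sum_(p : 'I_n * 'I_n) \sum_(q : 'I_n * 'I_n) X p.1 p.2 * Y q.1 q.2 * sign_cmp p.2 q.2
  - concordance X Y).
  rewrite /concordance -big_split -!sumrB /=; apply: eq_bigr => p _.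
  by rewrite -big_split -!sumrB /=; apply: eq_bigr => q _; ring.
rewrite sum_margins_fst_sign // sum_margins_snd_sign // addr0 subr0.
under eq_bigr do rewrite -mulr_sumr (sum_margins_mass n_gt0 hY) mulr1.
by rewrite (sum_margins_mass n_gt0 hX).
Qed.

Definition sign_gram i j : R := n%:R^-1 * \sum_k sign_cmp i k * sign_cmp j k.

Lemma sum_comonotone (f : 'I_n -> 'I_n -> R) :
  \sum_(p : 'I_n * 'I_n) E p.1 p.2 * f p.1 p.2 = n%:R^-1 * \sum_i f i i.
Proof.
rewrite -(pair_bigA _ (fun i j => E i j * f i j)) mulr_sumr; apply: eq_bigr => i _.
rewrite (bigD1 i) //= big1 => [|j ji]; rewrite !mxE ?eqxx ?mulr1 ?addr0 //.
by rewrite eq_sym (negbTE ji) mulr0 mul0r.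
Qed.

Lemma concordance_comonotone X :
  concordance E X = \sum_(p : 'I_n * 'I_n) X p.1 p.2 * sign_gram p.1 p.2.
Proof.
rewrite concordanceC /concordance; apply: eq_bigr => p _.
under eq_bigr do rewrite -mulrA mulrCA.
by rewrite (sum_comonotone (fun k l => X p.1 p.2 * (sign_cmp p.1 k * sign_cmp p.2 l)))
  -mulr_sumr mulrCA.
Qed.

Lemma sign_cmp_prod_majorant i j : exists h h' : 'I_n -> R,
  (forall k l, sign_cmp i k * sign_cmp j l <= h k + h' l) /\
  (forall k, sign_cmp i k * sign_cmp j k = h k + h' k).
Proof.
case: (ltngtP i j) => ij; [
  exists (fun k => sign_cmp i k + 1), (fun l => - sign_cmp j l) |
  exists (fun k => 1 - sign_cmp i k), (fun l => sign_cmp j l) |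
  exists (fun k => sign_cmp i k ^+ 2), (fun=> 0)];
rewrite /sign_cmp; split=> [k l|k]; case: (ltngtP k i) => ?; case: (ltngtP k j) => ?;
  try case: (ltngtP l j) => ?; try lia; lra.
Qed.

Lemma sum_margins_le_diag X (F : 'I_n -> 'I_n -> R) (h h' : 'I_n -> R) :
  uniform_margins X -> (forall k l, 0 <= X k l) ->
  (forall k l, F k l <= h k + h' l) -> (forall k, F k k = h k + h' k) ->
  \sum_(q : 'I_n * 'I_n) X q.1 q.2 * F q.1 q.2 <= n%:R^-1 * \sum_k F k k.
Proof.
move=> hX X_ge0 F_le F_diag.
apply: (@le_trans _ _ (\sum_(q : 'I_n * 'I_n) X q.1 q.2 * (h q.1 + h' q.2))).
  by apply: ler_sum => q _; apply: ler_wpM2l.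
under eq_bigr do rewrite mulrDr.
rewrite big_split /= (sum_margins_fst hX h) (sum_margins_snd hX h') -mulrDr -big_split.
by under [X in _ <= _ * X]eq_bigr do rewrite F_diag.
Qed.

Lemma concordance_le_comonotone X : uniform_margins X -> (forall k l, 0 <= X k l) ->
  concordance X X <= concordance E X.
Proof.
move=> hX X_ge0; rewrite concordance_comonotone; apply: ler_sum => p _.
under eq_bigr do rewrite -mulrA.
rewrite -mulr_sumr; apply: ler_wpM2l => //.
have [h [h' [le_h eq_h]]] := sign_cmp_prod_majorant p.1 p.2.
exact: sum_margins_le_diag hX X_ge0 le_h eq_h.
Qed.

Lemma sign_gram_le_diag i j : sign_gram i j <= sign_gram i i.
Proof.
rewrite /sign_gram ler_wpM2l ?invr_ge0 ?ler0n //; apply: ler_sum => k _.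
by rewrite /sign_cmp; case: (ltngtP k i) => ?; case: (ltngtP k j) => ?; lra.
Qed.

Lemma sign_gram_lt_diag i j : i != j -> sign_gram i j < sign_gram i i.
Proof.
move=> ij; have n_gt0 : (0 < n)%N by apply: leq_ltn_trans (ltn_ord i).
rewrite /sign_gram ltr_pM2l ?invr_gt0 ?ltr0n //.
rewrite [X in X < _](bigD1 j) // [X in _ < X](bigD1 j) //=; apply: ltr_leD.
  rewrite sign_cmpxx mulr0 /sign_cmp; move: ij; rewrite -val_eqE /=.
  by case: (ltngtP j i) => //; lra.
apply: ler_sum => k _.
by rewrite /sign_cmp; case: (ltngtP k i) => ?; case: (ltngtP k j) => ?; lra.
Qed.

Lemma uniform_margins_diag X : uniform_margins X ->
  (forall i j, i != j -> X i j = 0) -> X = E.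
Proof.
move=> [X_row _] off0; apply/matrixP => i j; rewrite !mxE.
case: eqVneq => [<-|ij]; last by rewrite off0 // mulr0.
rewrite mulr1 -(X_row i) (bigD1 i) //= big1 ?addr0 // => k ki.
by rewrite off0 // eq_sym.
Qed.

Lemma exists_offdiag_gt0 X : uniform_margins X -> (forall k l, 0 <= X k l) ->
  X <> E -> exists i j, i != j /\ 0 < X i j.
Proof.
move=> hX X_ge0 XnE.
have [/existsP [i /existsP [j /andP [ij Xij]]]|no_off] :=
  boolP [exists i, exists j, (i != j) && (0 < X i j)]; first by exists i, j.
case: XnE; apply: uniform_margins_diag => // i j ij.
apply/eqP; rewrite eq_le X_ge0 andbT leNgt; apply: contra no_off => Xij.
by apply/existsP; exists i; apply/existsP; exists j; rewrite ij.
Qed.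

Lemma concordance_lt_comonotone X : uniform_margins X -> (forall k l, 0 <= X k l) ->
  X <> E -> concordance E X < concordance E E.
Proof.
move=> hX X_ge0 XnE.
have -> : concordance E E = \sum_(p : 'I_n * 'I_n) X p.1 p.2 * sign_gram p.1 p.1.
  rewrite concordance_comonotone sum_comonotone.
  by rewrite (sum_margins_fst hX (fun i => sign_gram i i)).
rewrite -subr_gt0 concordance_comonotone -sumrB.
under eq_bigr do rewrite -mulrBr.
have [i [j [ij Xij]]] := exists_offdiag_gt0 hX X_ge0 XnE.
rewrite (bigD1 (i, j)) //=; apply: ltr_pwDl.
  by rewrite mulr_gt0 // subr_gt0 sign_gram_lt_diag.
by apply: sumr_ge0 => p _; rewrite mulr_ge0 // subr_ge0 sign_gram_le_diag.
Qed.

End Concordance.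

Section KendallTau.
Variables (R : realType) (n : nat).

Lemma Xi_sign : Xi n = \matrix_(i, k) (1 + sign_cmp i k) :> 'M[R]_n.
Proof.
apply/matrixP => i k; rewrite !mxE /sign_cmp -val_eqE /=.
by case: ltngtP => //= _; rewrite ?subrr ?addr0 //; lra.
Qed.

Lemma trace_Xi_expand (X Y : 'M[R]_n) :
  \tr (Xi n *m X *m Xi n *m Y^T) = \sum_(p : 'I_n * 'I_n) \sum_(q : 'I_n * 'I_n)
     Y p.1 p.2 * X q.1 q.2 * ((1 + sign_cmp p.1 q.1) * (1 - sign_cmp p.2 q.2)).
Proof.
rewrite Xi_sign /mxtrace -(pair_bigA _ (fun i j => \sum_(q : 'I_n * 'I_n)
  Y i j * X q.1 q.2 * ((1 + sign_cmp i q.1) * (1 - sign_cmp j q.2)))).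
apply: eq_bigr => i _; rewrite mxE; apply: eq_bigr => j _.
rewrite !mxE big_distrl -(pair_bigA _ (fun k l =>
  Y i j * X k l * ((1 + sign_cmp i k) * (1 - sign_cmp j l)))) exchange_big.
apply: eq_bigr => l _; rewrite !mxE !big_distrl; apply: eq_bigr => k _.
by rewrite /= !mxE (sign_cmp_antisym j l); ring.
Qed.

Lemma tau_concordance (M : 'M[R]_n) :
  (0 < n)%N -> uniform_margins M -> tau M = concordance M M.
Proof.
move=> n_gt0 hM.
by rewrite /tau trace_Xi_expand sum_margins_Xi_weights // opprB addrC subrK.
Qed.

End KendallTau.

Theorem lemma11 (R : realType) (n : nat) (hn : (2 <= n)%N) (P : 'M[R]_n) :
  checkerboard P -> P <> comonotone n ->
  forall a b : R, 0 <= a -> a < b -> b <= 1 ->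
    tau (a *: comonotone n + (1 - a) *: P) < tau (b *: comonotone n + (1 - b) *: P).
Proof.
move=> [P_ge0 hP] PnE a b a0 ab b1.
have n_gt0 : (0 < n)%N by apply: leq_trans hn.
have hE : uniform_margins (comonotone n : 'M[R]_n) := uniform_margins_comonotone.
have hM t : uniform_margins (t *: comonotone n + (1 - t) *: P).
  exact: uniform_margins_lincomb.
rewrite !tau_concordance // !concordance_lincomb.
apply: quadratic_bezier_lt => //.
  exact: concordance_le_comonotone.
exact: concordance_lt_comonotone.
Qed.
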